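(* Let $\mathbb A=(A_n)_{n\in\mathbb N}$ be a sequence of invertible linear operators on $\mathbb R^d$ and $\mathcal S=\{\|\cdot\|_n;\ n\in\mathbb N\}$ a sequence of norms on $\mathbb R^d$ such that there exist $K,a>0$ with $\|\mathcal A(m,n)x\|_m\le K(m/n)^a\|x\|_n$ and $\|\mathcal A(n,m)x\|_n\le K(m/n)^a\|x\|_m$ for all $m\ge n$ and $x$. Let $\mathbb B=(B_n)_{n\in\mathbb Z^+}$ with $B_n=\mathcal A(2^{n+1},2^n)$ and $\tilde{\mathcal S}=\{\|\cdot\|_{2^n};\ n\in\mathbb Z^+\}$. Then there exist $1\le r\le d$ and $a_1\le b_1<\dots<a_r\le b_r$ such that $$\Sigma_{ED,\mathbb B,\tilde{\mathcal S}}=\bigcup_{i=1}^r[a_i,b_i]\quad\text{and}\quad\Sigma_{PD,\mathbb A,\mathcal S}=\bigcup_{i=1}^r\Big[\frac{\log a_i}{\log2},\frac{\log b_i}{\log2}\Big].$$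
   Context: $\mathbb N=\{1,2,\dots\}$, $\mathbb Z^+=\{0,1,\dots\}$. For invertible $(C_n)$, $\mathcal C(m,n)=C_{m-1}\cdots C_n$ ($m>n$), $\mathrm{Id}$ ($m=n$), $C_m^{-1}\cdots C_{n-1}^{-1}$ ($m<n$). Strong polynomial dichotomy of $(C_n)_{n\in\mathbb N}$ w.r.t. $\{\|\cdot\|_n\}$: there exist $K>0$, $a\ge\lambda>0$, projections $P_n$ with $C_nP_n=P_{n+1}C_n$ and, for $m\ge n$, $x$, $Q_m=\mathrm{Id}-P_m$: $\|\mathcal C(m,n)P_nx\|_m\le K(m/n)^{-\lambda}\|x\|_n$, $\|\mathcal C(n,m)Q_mx\|_n\le K(m/n)^{-\lambda}\|x\|_m$, $\|\mathcal C(m,n)x\|_m\le K(m/n)^a\|x\|_n$, $\|\mathcal C(n,m)x\|_n\le K(m/n)^a\|x\|_m$. Strong exponential dichotomy of $(C_n)_{n\in\mathbb Z^+}$ w.r.t. $\{|\cdot|_n\}$: same with $(m/n)^{-\lambda}$ replaced by $e^{-\lambda(m-n)}$ and $(m/n)^a$ by $e^{a(m-n)}$. $\Sigma_{PD,\mathbb A,\mathcal S}$: set of $\tau\in\mathbb R$ such that $(((n+1)/n)^{-\tau}A_n)_{n\in\mathbb N}$ does not admit a strong polynomial dichotomy w.r.t. $\mathcal S$. $\Sigma_{ED,\mathbb B,\tilde{\mathcal S}}$: set of $\tau>0$ such that $(\tau^{-1}B_n)_{n\in\mathbb Z^+}$ does not admit a strong exponential dichotomy w.r.t. $\tilde{\mathcal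 S}$. *)

From HB Require Import structures.
From mathcomp Require Import all_boot all_order all_algebra.
From mathcomp Require Import all_classical all_reals.
From mathcomp Require Import all_analysis.
Set Implicit Arguments. Unset Strict Implicit. Unset Printing Implicit Defensive.
Import Order.TTheory GRing.Theory Num.Theory.
Local Open Scope ring_scope.
Local Open Scope classical_set_scope.

Section Defs.
Variables (R : realType) (d : nat).

Definition is_norm (f : 'cV[R]_d -> R) : Prop :=
  [/\ forall x, 0 <= f x,
      forall x, f x = 0 -> x = 0,
      forall (c : R) x, f (c *: x) = `|c| * f x
    & forall x y, f (x + y) <= f x + f y].

Fixpoint cocycle_fw (C : nat -> 'M[R]_d) (n k : nat) : 'M[R]_d :=
  match k with
  | 0 => 1%:M
  | k'.+1 => C (n + k')%N *m cocycle_fw C n k'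
  end.

Definition cocycle (C : nat -> 'M[R]_d) (m n : nat) : 'M[R]_d :=
  if (n <= m)%N then cocycle_fw C n (m - n)
  else invmx (cocycle_fw C m (n - m)).

Definition strong_poly_dichotomy (C : nat -> 'M[R]_d)
    (N : nat -> 'cV[R]_d -> R) : Prop :=
  exists (K a lam : R) (P : nat -> 'M[R]_d),
    [/\ 0 < K, 0 < lam & lam <= a] /\
    [/\         (forall n, (0 < n)%N -> P n *m P n = P n),
        (forall n, (0 < n)%N -> C n *m P n = P n.+1 *m C n) &
        (forall m n, (0 < n)%N -> (n <= m)%N -> forall x : 'cV[R]_d,
          [/\ N m (cocycle C m n *m (P n *m x))
                <= K * ((m%:R / n%:R) `^ (- lam)) * N n x,
              N n (cocycle C n m *m ((1%:M - P m) *m x))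
                <= K * ((m%:R / n%:R) `^ (- lam)) * N m x,
              N m (cocycle C m n *m x) <= K * ((m%:R / n%:R) `^ a) * N n x &
              N n (cocycle C n m *m x) <= K * ((m%:R / n%:R) `^ a) * N m x])].

Definition strong_exp_dichotomy (C : nat -> 'M[R]_d)
    (N : nat -> 'cV[R]_d -> R) : Prop :=
  exists (K a lam : R) (P : nat -> 'M[R]_d),
    [/\ 0 < K, 0 < lam & lam <= a] /\
    [/\         (forall n, P n *m P n = P n),
        (forall n, C n *m P n = P n.+1 *m C n) &
        (forall m n, (n <= m)%N -> forall x : 'cV[R]_d,
          [/\ N m (cocycle C m n *m (P n *m x))
                <= K * expR (- lam * (m%:R - n%:R)) * N n x,
              N n (cocycle C n m *m ((1%:M - P m) *m x))
                <= K * expR (- lam * (m%:R - n%:R)) * N m x,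
              N m (cocycle C m n *m x) <= K * expR (a * (m%:R - n%:R)) * N n x &
              N n (cocycle C n m *m x) <= K * expR (a * (m%:R - n%:R)) * N m x])].

Definition Sigma_PD (A : nat -> 'M[R]_d) (N : nat -> 'cV[R]_d -> R) : set R :=
  [set tau | ~ strong_poly_dichotomy
                 (fun n => ((n.+1)%:R / n%:R) `^ (- tau) *: A n) N].

Definition Sigma_ED (B : nat -> 'M[R]_d) (N : nat -> 'cV[R]_d -> R) : set R :=
  [set tau | 0 < tau /\ ~ strong_exp_dichotomy (fun n => tau^-1 *: B n) N].

End Defs.

From HB Require Import structures.
From mathcomp Require Import all_boot all_order all_algebra.
From mathcomp Require Import all_classical all_reals.
From mathcomp Require Import all_analysis.
From mathcomp Require Import zify ring lra.
Import Order.TTheory GRing.Theory Num.Theory.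
Set Implicit Arguments. Unset Strict Implicit. Unset Printing Implicit Defensive.
Local Open Scope ring_scope.
Local Open Scope classical_set_scope.

(* Sample A at the dyadic times: B n = A(2 ^ n.+1, 2 ^ n) has bounded exponential
   growth, with rate a ln 2. Say that B has a dichotomy at s when expR (- s) *: B has an
   exponential dichotomy. The rank of its stable projection is independent of the
   projection and nondecreasing in s, the set of s with a dichotomy of a given rank is
   open and convex, and the ranks d and 0 occur above and below the growth rate. So
   the dichotomy spectrum of B, where no dichotomy exists, is a union of r <= d
   disjoint compact intervals.
   Sigma_ED is the image of this spectrum under expR, since tau^-1 *: B is
   expR (- ln tau) *: B. Sigma_PD is its image under s |-> s / ln 2: a polynomial
   dichotomy of the rescaled A restricts to a dichotomy of B at tau ln 2 along the
   times 2 ^ n, and conversely a dichotomy of B extends to all times, since every n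
   lies in a dyadic block [2 ^ l, 2 ^ l.+1) across which bounded growth of A costs a
   fixed constant. *)

Section CocycleAlgebra.
Variables (R : realType) (d : nat).
Implicit Types (X Y : 'M[R]_d) (C : nat -> 'M[R]_d).

Lemma mx_ext_cV X Y : (forall x : 'cV[R]_d, X *m x = Y *m x) -> X = Y.
Proof.
move=> eqXY; apply/matrixP => i j; have := eqXY (delta_mx j 0); rewrite -!colE.
by move/(congr1 (fun v : 'cV[R]_d => v i 0)); rewrite !mxE.
Qed.

Lemma invmx_unique X Y : Y \in unitmx -> X *m Y = 1%:M -> X = invmx Y.
Proof. by move=> uY XY1; rewrite -[X]mulmx1 -(mulmxV uY) mulmxA XY1 mul1mx. Qed.

Lemma invmxM X Y : X \in unitmx -> Y \in unitmx ->
  invmx (X *m Y) = invmx Y *m invmx X.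
Proof.
move=> uX uY; symmetry; apply: invmx_unique; first by rewrite unitmx_mul uX uY.
by rewrite mulmxA -(mulmxA (invmx Y)) mulVmx // mulmx1 mulVmx.
Qed.

Lemma cocycle_fwD C n k1 k2 :
  cocycle_fw C n (k1 + k2) = cocycle_fw C (n + k1) k2 *m cocycle_fw C n k1.
Proof.
elim: k2 => [|k2 IH]; first by rewrite addn0 /= mul1mx.
by rewrite addnS /= IH mulmxA addnA.
Qed.

Lemma cocycle_fw_scale C (f : nat -> R) n k :
  cocycle_fw (fun j => expR (f j.+1 - f j) *: C j) n k
  = expR (f (n + k)%N - f n) *: cocycle_fw C n k.
Proof.
elim: k => [|k IH] /=; first by rewrite addn0 subrr expR0 scale1r.
rewrite IH -scalemxAr scalemxAl scalerA -expRD -scalemxAl addnS.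
by congr (expR _ *: _); lra.
Qed.

Lemma cocycle_id C n : cocycle C n n = 1%:M.
Proof. by rewrite /cocycle leqnn subnn. Qed.

Lemma cocycle_succ C n : cocycle C n.+1 n = C n.
Proof. by rewrite /cocycle leqnSn subSnn /= addn0 mulmx1. Qed.

Lemma cocycle_eq C C' lo a b : (forall j, (lo <= j)%N -> C j = C' j) ->
  (lo <= a)%N -> (lo <= b)%N -> cocycle C a b = cocycle C' a b.
Proof.
move=> eqCC' ha hb.
have eq_fw n k : (lo <= n)%N -> cocycle_fw C n k = cocycle_fw C' n k.
  move=> hn; elim: k => [//|k IH] /=.
  by rewrite IH eqCC' // (leq_trans hn) ?leq_addr.
by rewrite /cocycle; case: leqP => _; rewrite eq_fw.
Qed.

Section Invertible.
Variables (C : nat -> 'M[R]_d) (lo : nat).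
Hypothesis C_unit : forall j, (lo <= j)%N -> C j \in unitmx.

(* [fundmx n] is C(n, lo) for [lo <= n]. *)
Definition fundmx n := cocycle_fw C lo (n - lo).

Lemma cocycle_fw_unit n k : (lo <= n)%N -> cocycle_fw C n k \in unitmx.
Proof.
move=> hn; elim: k => [|k IH] /=; first exact: unitmx1.
by rewrite unitmx_mul IH C_unit ?andbT // (leq_trans hn) ?leq_addr.
Qed.

Lemma fundmx_unit n : fundmx n \in unitmx.
Proof. exact: cocycle_fw_unit. Qed.

Lemma cocycle_fundmx a b : (lo <= a)%N -> (lo <= b)%N ->
  cocycle C a b = fundmx a *m invmx (fundmx b).
Proof.
move=> ha hb; rewrite /cocycle /fundmx; case: leqP => hab.
  have -> : (a - lo = (b - lo) + (a - b))%N by lia.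
  by rewrite cocycle_fwD subnKC // mulmxK ?cocycle_fw_unit.
have -> : (b - lo = (a - lo) + (b - a))%N by lia.
by rewrite cocycle_fwD subnKC // invmxM ?cocycle_fw_unit // mulKVmx ?cocycle_fw_unit.
Qed.

Lemma cocycle_comp a b c : (lo <= a)%N -> (lo <= b)%N -> (lo <= c)%N ->
  cocycle C a b *m cocycle C b c = cocycle C a c.
Proof.
by move=> ha hb hc; rewrite !cocycle_fundmx // mulmxA mulmxKV ?fundmx_unit.
Qed.

Lemma cocycle_mulV a b : (lo <= a)%N -> (lo <= b)%N ->
  cocycle C a b *m cocycle C b a = 1%:M.
Proof. by move=> ha hb; rewrite cocycle_comp // cocycle_id. Qed.

Lemma cocycle_unit a b : (lo <= a)%N -> (lo <= b)%N -> cocycle C a b \in unitmx.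
Proof.
by move=> ha hb; rewrite cocycle_fundmx // unitmx_mul unitmx_inv !fundmx_unit.
Qed.

Lemma cocycle_intertwine (P : nat -> 'M[R]_d) a b :
  (forall j, (lo <= j)%N -> C j *m P j = P j.+1 *m C j) ->
  (lo <= a)%N -> (lo <= b)%N ->
  cocycle C a b *m P b = P a *m cocycle C a b.
Proof.
move=> CP ha hb.
have fw_P k : cocycle_fw C lo k *m P lo = P (lo + k)%N *m cocycle_fw C lo k.
  elim: k => [|k IH] /=; first by rewrite addn0 mul1mx mulmx1.
  by rewrite -mulmxA IH mulmxA CP ?leq_addr // mulmxA addnS.
have fund_P c : (lo <= c)%N -> fundmx c *m P lo = P c *m fundmx c.
  by move=> hc; rewrite /fundmx fw_P subnKC.
have invfund_P : invmx (fundmx b) *m P b = P lo *m invmx (fundmx b).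
  rewrite -[LHS]mulmx1 -(mulmxV (fundmx_unit b)) !mulmxA.
  by rewrite -(mulmxA (invmx _)) -fund_P // mulmxA mulVmx ?fundmx_unit // mul1mx.
by rewrite cocycle_fundmx // -mulmxA invfund_P mulmxA fund_P // mulmxA.
Qed.

End Invertible.

Lemma cocycle_scale C (f : nat -> R) lo a b :
  (forall j, (lo <= j)%N -> C j \in unitmx) -> (lo <= a)%N -> (lo <= b)%N ->
  cocycle (fun j => expR (f j.+1 - f j) *: C j) a b
  = expR (f a - f b) *: cocycle C a b.
Proof.
move=> C_unit ha hb.
have eR_unit t : expR t \is a GRing.unit by rewrite unitfE gt_eqF ?expR_gt0.
have C'_unit j : (lo <= j)%N -> expR (f j.+1 - f j) *: C j \in unitmx.
  by move=> hj; rewrite unitmxZ ?eR_unit ?C_unit.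
rewrite (cocycle_fundmx C'_unit) // (cocycle_fundmx C_unit) // /fundmx.
rewrite !cocycle_fw_scale !subnKC // invmxZ; last first.
  by rewrite unitmxZ ?eR_unit ?(cocycle_fw_unit C_unit).
rewrite -scalemxAl -scalemxAr scalerA -expRN -expRD.
by congr (expR _ *: _); lra.
Qed.

End CocycleAlgebra.

Section Norms.
Variables (R : realType) (d : nat) (f : 'cV[R]_d -> R).
Hypothesis f_norm : is_norm f.

Lemma norm_ge0 x : 0 <= f x.
Proof. by case: f_norm. Qed.

Lemma norm0 : f 0 = 0.
Proof. by case: f_norm => _ _ fZ _; have := fZ 0 0; rewrite scale0r normr0 mul0r. Qed.

Lemma normZ_ge0 c x : 0 <= c -> f (c *: x) = c * f x.
Proof. by case: f_norm => _ _ fZ _ hc; rewrite fZ ger0_norm. Qed.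

Lemma norm_eq0_small x : (forall e, 0 < e -> f x <= e) -> x = 0.
Proof.
move=> small; case: f_norm => _ f_eq0 _ _; apply: f_eq0; apply/eqP.
rewrite eq_le norm_ge0 andbT; apply/ler_addgt0Pr => e he; rewrite add0r.
exact: small.
Qed.

End Norms.

Section ExpBounds.
Variable R : realType.
Implicit Types (X Y a b c u v w : R).

Lemma ler_mulexpR K K' a b X : 0 <= K -> K <= K' -> a <= b -> 0 <= X ->
  K * expR a * X <= K' * expR b * X.
Proof.
move=> hK hKK' hab hX; apply: ler_wpM2r => //; apply: ler_pM => //.
by rewrite ler_expR.
Qed.

Lemma ler_expR_scale K K' X Y u v w : 0 <= K -> K <= K' -> 0 <= Y ->
  X <= K * expR w * Y -> w + u <= v -> expR u * X <= K' * expR v * Y.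
Proof.
move=> hK hKK' hY hX hv; apply: le_trans (ler_wpM2l (expR_ge0 u) hX) _.
rewrite (_ : expR u * (K * expR w * Y) = K * expR (w + u) * Y); last first.
  by rewrite expRD; ring.
exact: ler_mulexpR.
Qed.

Lemma ler_expR_unscale K X Y u v w : 0 <= K -> 0 <= Y ->
  expR u * X <= K * expR v * Y -> v - u = w -> X <= K * expR w * Y.
Proof.
move=> hK hY hX hw.
rewrite (_ : X = expR (- u) * (expR u * X)); last first.
  by rewrite mulrA -expRD addNr expR0 mul1r.
by apply: ler_expR_scale hX _ => //; rewrite -hw; lra.
Qed.

Lemma expR_decay_small (l A e : R) : 0 < l -> 0 <= A -> 0 < e ->
  exists k : nat, A * expR (- (l * k%:R)) <= e.
Proof.
move=> hl hA he; set k := Num.Def.archi_bound (A / (e * l)); exists k.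
have hel : 0 < e * l by exact: mulr_gt0.
have : A / (e * l) < k%:R by apply: archi_boundP; exact: divr_ge0 (ltW hel).
rewrite ltr_pdivrMr // => hk.
have := expR_ge1Dx (l * k%:R); rewrite expRN ler_pdivrMr ?expR_gt0 //.
have : 0 <= (k%:R : R) by []; nra.
Qed.

Lemma mul_le_norm_bounds c w u v : `|c| <= u -> `|w| <= v -> c * w <= u * v.
Proof.
move=> hc hw; apply: le_trans (ler_norm _) _; rewrite normrM.
by apply: ler_pM.
Qed.

Lemma ler_chain3 (X1 X2 X3 X4 k1 k2 k3 : R) : 0 <= k1 -> 0 <= k2 ->
  X1 <= k1 * X2 -> X2 <= k2 * X3 -> X3 <= k3 * X4 -> X1 <= k1 * k2 * k3 * X4.
Proof.
move=> k1_ge0 k2_ge0 X12 X23 X34; rewrite -!mulrA.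
exact: le_trans X12 (ler_wpM2l k1_ge0 (le_trans X23 (ler_wpM2l k2_ge0 X34))).
Qed.

Lemma natrB_ge0 (m n : nat) : (n <= m)%N -> 0 <= (m%:R - n%:R : R).
Proof. by move=> nm; rewrite subr_ge0 ler_nat. Qed.

End ExpBounds.

Lemma nat_discrete_ivt (Q : nat -> Prop) r : Q 0%N -> ~ Q r ->
  exists2 i, (i < r)%N & Q i /\ ~ Q i.+1.
Proof.
elim: r => [//|r IH] Q0 Qr; case: (pselect (Q r)) => [Qr'|nQr]; first by exists r.
by have [i ir Qi] := IH Q0 nQr; exists i => //; exact: ltnW.
Qed.

Section OrderedIntervals.
Variables (R : realType) (L : nat -> set R) (r : nat).
Hypothesis L_neq0 : forall i, (i <= r)%N -> L i !=set0.
Hypothesis L_open : forall i s, L i s -> exists2 e, 0 < e & L i (s - e) /\ L i (s + e).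
Hypothesis L_convex : forall i s1 s2 s, L i s1 -> L i s2 -> s1 <= s <= s2 -> L i s.
Hypothesis L_ordered : forall i j u w, (i < j <= r)%N -> L i u -> L j w -> u < w.
Hypothesis L_bot : forall s, exists2 u, L 0%N u & u < s.
Hypothesis L_top : forall s, exists2 w, L r w & s < w.

Lemma le_sup_ordered i j u : (j <= i < r)%N -> L j u -> u <= sup (L i).
Proof.
move=> /andP[ji ir] Lju; have [w Liw] := L_neq0 (ltnW ir).
have [y Lsy] := L_neq0 ir.
have ub : has_ubound (L i).
  by exists y => v Liv; apply/ltW/(L_ordered _ Liv Lsy); rewrite ltnSn.
move: ji; rewrite leq_eqVlt => /orP[/eqP eq_ji | ji].
  by move: Lju; rewrite eq_ji; exact: ub_le_sup.
apply: le_trans (ub_le_sup ub Liw); apply/ltW/(L_ordered _ Lju Liw).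
by rewrite ji ltnW.
Qed.

Lemma inf_le_ordered i j w : (i < j <= r)%N -> L j w -> inf (L i.+1) <= w.
Proof.
move=> /andP[ij jr] Ljw; have [u Liu] := L_neq0 (ltnW (leq_trans ij jr)).
have ir1 : (i.+1 <= r)%N by exact: leq_trans ij jr.
have [v Lsv] := L_neq0 ir1.
have lb : has_lbound (L i.+1).
  by exists u => y Lsy; apply/ltW/(L_ordered _ Liu Lsy); rewrite ltnSn.
move: ij; rewrite leq_eqVlt => /orP[/eqP eq_ij | ij].
  by move: Ljw; rewrite -eq_ij; exact: ge_inf.
apply: le_trans (ge_inf lb Lsv) _; apply/ltW/(L_ordered _ Lsv Ljw).
by rewrite ij.
Qed.

Lemma sup_le_inf i : (i < r)%N -> sup (L i) <= inf (L i.+1).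
Proof.
move=> ir; apply: ge_sup; first exact: L_neq0 (ltnW ir).
move=> u Liu; apply: lb_le_inf; first exact: L_neq0.
by move=> w Lsw; apply/ltW/(L_ordered _ Liu Lsw); rewrite ltnSn.
Qed.

Lemma inf_lt_sup i : (i.+1 < r)%N -> inf (L i.+1) < sup (L i.+1).
Proof.
move=> ir; have [w Lw] := L_neq0 (ltnW ir); have [e e_gt0 [Lwe Lwe']] := L_open Lw.
have h1 : inf (L i.+1) <= w - e by apply: (inf_le_ordered _ Lwe); rewrite ltnSn (ltnW ir).
have h2 : w + e <= sup (L i.+1) by apply: (le_sup_ordered _ Lwe'); rewrite leqnn ir.
lra.
Qed.

Lemma notin_ordered_intervals s :
  (forall i, (i <= r)%N -> ~ L i s) <->
  exists2 i, (i < r)%N & sup (L i) <= s <= inf (L i.+1).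
Proof.
split=> [notLs | [i ir /andP[ge_sup le_inf]] j jr Ljs].
  pose Q j := exists2 u, L j u & u < s.
  have Q0 : Q 0%N by exact: L_bot.
  have nQr : ~ Q r.
    move=> [u Lru us]; have [w Lrw sw] := L_top s.
    by apply: (notLs r (leqnn r)); apply: L_convex Lru Lrw _; rewrite !ltW.
  have [i ir [[u Liu us] nQi]] := nat_discrete_ivt Q0 nQr.
  exists i => //; apply/andP; split.
    apply: ge_sup; first exact: L_neq0 (ltnW ir).
    move=> w Liw; rewrite leNgt; apply/negP => sw.
    by apply: (notLs i (ltnW ir)); apply: L_convex Liu Liw _; rewrite !ltW.
  apply: lb_le_inf; first exact: L_neq0.
  by move=> w Lsw; rewrite leNgt; apply/negP => ws; apply: nQi; exists w.
have [e e_gt0 [Lse Lse']] := L_open Ljs.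
case: (leqP j i) => ij.
  have : s + e <= sup (L i) by apply: (le_sup_ordered (j := j)); rewrite ?ij.
  lra.
have : inf (L i.+1) <= s - e by apply: (inf_le_ordered (j := j)); rewrite ?ij.
lra.
Qed.

End OrderedIntervals.

Section RankSpectrum.
Variables (R : realType) (rk : R -> nat -> Prop) (d : nat).
Hypothesis d_gt0 : (0 < d)%N.
Hypothesis rk_mono : forall s1 s2 k1 k2,
  rk s1 k1 -> rk s2 k2 -> s1 <= s2 -> (k1 <= k2)%N.
Hypothesis rk_open : forall s k,
  rk s k -> exists2 e, 0 < e & rk (s - e) k /\ rk (s + e) k.
Hypothesis rk_convex : forall s1 s2 s k, rk s1 k -> rk s2 k -> s1 <= s <= s2 -> rk s k.
Hypothesis rk_le : forall s k, rk s k -> (k <= d)%N.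
Hypothesis rk_bot : forall s, exists2 u, rk u 0%N & u < s.
Hypothesis rk_top : forall s, exists2 w, rk w d & s < w.

(* The ranks that occur, in increasing order; 0 and d always occur. *)
Let realized k := `[< exists s, rk s k >].
Let ranks := 0%N :: rcons [seq k <- iota 1 d.-1 | realized k] d.
Let r := (size ranks).-1.
Let level i := [set s | rk s (nth 0%N ranks i)].

Lemma ranksE : ranks = [seq k <- iota 0 d.+1 | realized k].
Proof.
have realized0 : realized 0%N by apply/asboolP; have [u ? _] := rk_bot 0; exists u.
have realizedd : realized d by apply/asboolP; have [w ? _] := rk_top 0; exists w.
have iotaE : iota 1 d = rcons (iota 1 d.-1) d.
  by rewrite -cats1 -{1}[d](subnK d_gt0) iotaD subn1 add1n prednK.
by rewrite /ranks /= realized0 iotaE filter_rcons realizedd.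
Qed.

Lemma size_ranks : size ranks = r.+1.
Proof. by rewrite /r /ranks /= size_rcons. Qed.

Lemma rank_count_bounds : (1 <= r <= d)%N.
Proof.
rewrite /r /ranks /= size_rcons /= size_filter -{2}(prednK d_gt0) ltnS.
by apply: leq_trans (count_size _ _) _; rewrite size_iota.
Qed.

Lemma mem_ranks s k : rk s k -> k \in ranks.
Proof.
move=> rk_sk; rewrite ranksE mem_filter mem_iota /= add0n ltnS (rk_le rk_sk).
by rewrite andbT; apply/asboolP; exists s.
Qed.

Lemma rank_level_neq0 i : (i <= r)%N -> level i !=set0.
Proof.
move=> ir; have : nth 0%N ranks i \in [seq k <- iota 0 d.+1 | realized k].
  by rewrite -ranksE; apply: mem_nth; rewrite size_ranks ltnS.
by rewrite mem_filter => /andP[/asboolP[s rk_s] _]; exists s.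
Qed.

Lemma rank_level_ordered i j u w : (i < j <= r)%N -> level i u -> level j w -> u < w.
Proof.
move=> /andP[ij jr] lev_u lev_w; rewrite ltNge; apply/negP => wu.
have ranks_sorted : sorted ltn ranks.
  by rewrite ranksE; apply: sorted_filter; [exact: ltn_trans | exact: iota_ltn_sorted].
have := rk_mono lev_w lev_u wu; rewrite leqNgt.
rewrite (sorted_ltn_nth ltn_trans 0%N ranks_sorted i j _ _ ij) // inE size_ranks ltnS //.
exact: leq_trans (ltnW ij) jr.
Qed.

Theorem rank_spectrum_intervals : exists (r : nat) (a b : nat -> R),
  [/\ (1 <= r <= d)%N, (forall i, (i < r)%N -> a i <= b i),
      (forall i, (i.+1 < r)%N -> b i < a i.+1) &
      forall s, (forall k, ~ rk s k) <-> exists2 i, (i < r)%N & a i <= s <= b i].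
Proof.
have level_open i s : level i s -> exists2 e, 0 < e & level i (s - e) /\ level i (s + e).
  exact: rk_open.
have level_convex i s1 s2 s : level i s1 -> level i s2 -> s1 <= s <= s2 -> level i s.
  exact: rk_convex.
have level_top s : exists2 w, level r w & s < w.
  by rewrite /level /r /ranks /= size_rcons /= nth_rcons ltnn eqxx; exact: rk_top.
exists r, (fun i => sup (level i)), (fun i => inf (level i.+1)); split.
- exact: rank_count_bounds.
- exact: (sup_le_inf rank_level_neq0 rank_level_ordered).
- exact: (inf_lt_sup rank_level_neq0 level_open rank_level_ordered).
move=> s; rewrite -(notin_ordered_intervals rank_level_neq0 level_open level_convex
  rank_level_ordered rk_bot level_top).
split=> [notrk i _ | notL k rk_sk]; first exact: notrk.
have k_in := mem_ranks rk_sk.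
apply: (notL (index k ranks)); last by rewrite /level /= nth_index.
by rewrite -ltnS -size_ranks index_mem.
Qed.

End RankSpectrum.

Section ShiftedDichotomy.
Variables (R : realType) (d : nat) (C : nat -> 'M[R]_d) (M : nat -> 'cV[R]_d -> R).
Hypothesis C_unit : forall j, (0 <= j)%N -> C j \in unitmx.
Hypothesis M_norm : forall n, is_norm (M n).

(* An exponential dichotomy of [expR (- s) *: C] w.r.t. [M], written for [C] itself;
   the bounded-growth clauses are left out, they follow from bounded growth of [C]. *)
Record dichotomy_at (s : R) (P : nat -> 'M[R]_d) (K lam : R) : Prop := DichotomyAt {
  dichotomy_K_gt0 : 0 < K;
  dichotomy_lam_gt0 : 0 < lam;
  dichotomy_proj : forall n, P n *m P n = P n;
  dichotomy_intertwine : forall n, C n *m P n = P n.+1 *m C n;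
  dichotomy_stable : forall m n, (n <= m)%N -> forall x,
    M m (cocycle C m n *m (P n *m x))
      <= K * expR ((s - lam) * (m%:R - n%:R)) * M n x;
  dichotomy_unstable : forall m n, (n <= m)%N -> forall x,
    M n (cocycle C n m *m ((1%:M - P m) *m x))
      <= K * expR (- (s + lam) * (m%:R - n%:R)) * M m x }.

Definition dichotomy_spectrum := [set s | ~ exists P K lam, dichotomy_at s P K lam].

Definition dichotomy_rank s k :=
  exists P K lam, dichotomy_at s P K lam /\ \rank (P 0%N) = k.

Lemma dichotomy_rank_const n s P K lam :
  dichotomy_at s P K lam -> \rank (P n) = \rank (P 0%N).
Proof.
case=> _ _ _ CP _ _; have U_unit := cocycle_unit C_unit (leq0n n) (leq0n 0).
rewrite -(mxrankMfree (P n) (_ : row_free (cocycle C n 0))) ?row_free_unit //.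
rewrite -(cocycle_intertwine C_unit (fun j _ => CP j)) //.
by rewrite (eqmxMfull (P 0%N) (_ : row_full _)) ?row_full_unit.
Qed.

Lemma dichotomy_at_perturb s s' P K lam : dichotomy_at s P K lam ->
  `|s - s'| < lam -> dichotomy_at s' P K (lam - `|s - s'|).
Proof.
case=> K_gt0 lam_gt0 Pproj CP stable unstable ss'.
have ler_exp e e' m n X : e <= e' -> (n <= m)%N -> 0 <= X ->
    K * expR (e * (m%:R - n%:R)) * X <= K * expR (e' * (m%:R - n%:R)) * X.
  move=> ee' nm X_ge0; apply: ler_mulexpR => //; first exact: ltW.
  by rewrite ler_wpM2r // natrB_ge0.
split=> // [|m n nm x|m n nm x]; first by rewrite subr_gt0.
- apply: le_trans (stable m n nm x) (ler_exp _ _ _ _ _ _ nm (norm_ge0 (M_norm n) x)).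
  by have := ler_norm (s - s'); lra.
- apply: le_trans (unstable m n nm x) (ler_exp _ _ _ _ _ _ nm (norm_ge0 (M_norm m) x)).
  by have := ler_norm (s' - s); rewrite distrC; lra.
Qed.

Lemma dichotomy_rank_open s k : dichotomy_rank s k ->
  exists2 e, 0 < e & dichotomy_rank (s - e) k /\ dichotomy_rank (s + e) k.
Proof.
move=> [P [K [lam [D rankP]]]]; have lam_gt0 := dichotomy_lam_gt0 D.
have perturb s' : `|s - s'| = lam / 2 -> dichotomy_rank s' k.
  move=> ss'; exists P, K, (lam - `|s - s'|); split => //.
  by apply: dichotomy_at_perturb D _; rewrite ss' gtr_pMr ?invf_lt1 ?ltr1n.
exists (lam / 2); first by rewrite divr_gt0.
split; apply: perturb.
  by rewrite opprB addrC subrK ger0_norm // divr_ge0 ?ltW.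
by rewrite opprD addrA subrr add0r normrN ger0_norm // divr_ge0 ?ltW.
Qed.

Section TwoDichotomies.
Variables (s1 s2 : R) (P1 P2 : nat -> 'M[R]_d) (K1 K2 l1 l2 : R).
Hypothesis D1 : dichotomy_at s1 P1 K1 l1.
Hypothesis D2 : dichotomy_at s2 P2 K2 l2.
Hypothesis s12 : s1 <= s2.

(* Push [P1 n *m x] forward k steps (rate [s1 - l1]), project onto [ker P2] and
   pull back (rate [- (s2 + l2)]); as [s1 <= s2] the total rate is below [- l2]. *)
Lemma dichotomy_cross_decay n x k :
  M n ((1%:M - P2 n) *m (P1 n *m x)) <= K2 * K1 * expR (- (l2 * k%:R)) * M n x.
Proof.
case: D1 => K1_gt0 l1_gt0 _ _ stable1 _; case: D2 => K2_gt0 l2_gt0 _ CP2 _ unstable2.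
set m := (n + k)%N; have nm : (n <= m)%N by rewrite leq_addr.
have mn_k : (m%:R - n%:R : R) = k%:R by rewrite /m natrD; lra.
have Q2_comm : (1%:M - P2 m) *m cocycle C m n = cocycle C m n *m (1%:M - P2 n).
  by rewrite mulmxBl mulmxBr mul1mx mulmx1 (cocycle_intertwine C_unit).
have -> : (1%:M - P2 n) *m (P1 n *m x)
    = cocycle C n m *m ((1%:M - P2 m) *m (cocycle C m n *m (P1 n *m x))).
  rewrite (mulmxA (1%:M - P2 m)) Q2_comm -(mulmxA (cocycle C m n)).
  by rewrite (mulmxA (cocycle C n m)) (cocycle_mulV C_unit) // mul1mx.
apply: le_trans (unstable2 m n nm _) _.
apply: le_trans (ler_wpM2l _ (stable1 m n nm x)) _.
  by rewrite mulr_ge0 ?expR_ge0 ?ltW.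
rewrite mn_k (_ : K2 * _ * (K1 * _ * _)
  = K2 * K1 * expR (- (s2 + l2) * k%:R + (s1 - l1) * k%:R) * M n x); last first.
  by rewrite expRD; ring.
apply: ler_mulexpR; [by rewrite mulr_ge0 ?ltW | by [] | | exact: norm_ge0].
have k_ge0 : 0 <= (k%:R : R) by [].
have : 0 <= (s2 - s1) * k%:R by rewrite mulr_ge0 // subr_ge0.
have : 0 <= l1 * k%:R by rewrite mulr_ge0 // ltW.
lra.
Qed.

Lemma dichotomy_proj_incl n : P2 n *m P1 n = P1 n.
Proof.
case: D1 => K1_gt0 _ _ _ _ _; case: D2 => K2_gt0 l2_gt0 _ _ _ _.
apply: mx_ext_cV => x.
have Q_eq0 : (1%:M - P2 n) *m (P1 n *m x) = 0.
  apply: (norm_eq0_small (M_norm n)) => e e_gt0.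
  have [k small] := expR_decay_small l2_gt0
    (mulr_ge0 (mulr_ge0 (ltW K2_gt0) (ltW K1_gt0)) (norm_ge0 (M_norm n) x)) e_gt0.
  by apply: le_trans (dichotomy_cross_decay n x k) _; rewrite mulrAC.
move/eqP: Q_eq0; rewrite mulmxBl mul1mx subr_eq0 => /eqP ->.
by rewrite mulmxA.
Qed.

Lemma dichotomy_proj_range_eq n :
  \rank (P1 0%N) = \rank (P2 0%N) -> P1 n *m P2 n = P2 n.
Proof.
move=> rank12.
have sub12 : ((P1 n)^T <= (P2 n)^T)%MS.
  by rewrite -(dichotomy_proj_incl n) trmx_mul submxMl.
have := (mxrank_leqif_sup sub12).2.
rewrite !mxrank_tr (dichotomy_rank_const n D1) (dichotomy_rank_const n D2) rank12 eqxx.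
case/esym/submxP => D eqD.
have -> : P2 n = P1 n *m D^T by rewrite -[P2 n]trmxK eqD trmx_mul trmxK.
by rewrite mulmxA (dichotomy_proj D1).
Qed.

Lemma dichotomy_at_between s : s1 <= s -> s <= s2 ->
  \rank (P1 0%N) = \rank (P2 0%N) ->
  dichotomy_at s P2 (K1 * K2 + K2) (Num.min l1 l2).
Proof.
move=> s1s ss2 rank12.
have P12 := dichotomy_proj_range_eq ^~ rank12.
case: D1 => K1_gt0 l1_gt0 _ _ stable1 _.
case: D2 => K2_gt0 l2_gt0 P2proj CP2 stable2 unstable2.
have min1 : Num.min l1 l2 <= l1 by rewrite ge_min lexx.
have min2 : Num.min l1 l2 <= l2 by rewrite ge_min lexx orbT.
have K12_ge0 : 0 <= K1 * K2 by rewrite mulr_ge0 ?ltW.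
split=> // [||m n nm x|m n nm x].
- by rewrite addr_gt0 ?mulr_gt0.
- by rewrite lt_min l1_gt0.
- rewrite -P12 -(mulmxA (P1 n)); apply: le_trans (stable1 m n nm _) _.
  have P2_bound := stable2 n n (leqnn n) x.
  rewrite cocycle_id mul1mx subrr mulr0 expR0 mulr1 in P2_bound.
  apply: le_trans (ler_wpM2l _ P2_bound) _; first by rewrite mulr_ge0 ?expR_ge0 ?ltW.
  rewrite mulrA -[K1 * _ * K2]mulrA [expR _ * K2]mulrC mulrA.
  apply: ler_mulexpR => //; [by rewrite lerDl ltW | | exact: norm_ge0].
  by rewrite ler_wpM2r ?natrB_ge0 //; lra.
apply: le_trans (unstable2 m n nm x) _; apply: ler_mulexpR; last exact: norm_ge0.
- exact: ltW.
- by rewrite lerDr.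
by rewrite ler_wpM2r ?natrB_ge0 //; lra.
Qed.

End TwoDichotomies.

Section Growth.
Variables (Kg g : R).
Hypothesis Kg_gt0 : 0 < Kg.
Hypothesis C_growth : forall m n, (n <= m)%N -> forall x,
  M m (cocycle C m n *m x) <= Kg * expR (g * (m%:R - n%:R)) * M n x /\
  M n (cocycle C n m *m x) <= Kg * expR (g * (m%:R - n%:R)) * M m x.

Lemma dichotomy_at_above_growth s : g < s -> dichotomy_at s (fun _ => 1%:M) Kg (s - g).
Proof.
move=> gs; split=> // [|n|n|m n nm x|m n nm x]; first by rewrite subr_gt0.
- by rewrite mul1mx.
- by rewrite mul1mx mulmx1.
- by rewrite mul1mx (_ : s - (s - g) = g); [exact: (C_growth nm x).1 | lra].
rewrite subrr mul0mx mulmx0 norm0 //.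
by rewrite !mulr_ge0 ?expR_ge0 ?norm_ge0 ?ltW.
Qed.

Lemma dichotomy_at_below_growth s : s < - g -> dichotomy_at s (fun _ => 0) Kg (- s - g).
Proof.
move=> sg; split=> // [|n|n|m n nm x|m n nm x]; first by lra.
- by rewrite mul0mx.
- by rewrite mul0mx mulmx0.
- rewrite mul0mx mulmx0 norm0 //.
  by rewrite !mulr_ge0 ?expR_ge0 ?norm_ge0 ?ltW.
by rewrite subr0 mul1mx (_ : - (s + (- s - g)) = g); [exact: (C_growth nm x).2 | lra].
Qed.

Theorem dichotomy_spectrum_intervals : (0 < d)%N -> exists (r : nat) (a b : nat -> R),
  [/\ (1 <= r <= d)%N, (forall i, (i < r)%N -> a i <= b i),
      (forall i, (i.+1 < r)%N -> b i < a i.+1) &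
      forall s, dichotomy_spectrum s <-> exists2 i, (i < r)%N & a i <= s <= b i].
Proof.
move=> d_gt0; have [] := @rank_spectrum_intervals R dichotomy_rank d d_gt0.
- move=> s1 s2 _ _ [P1 [K1 [l1 [D1 <-]]]] [P2 [K2 [l2 [D2 <-]]]] s12.
  by rewrite -(dichotomy_proj_incl D1 D2 s12 0%N) mxrankM_maxl.
- exact: dichotomy_rank_open.
- move=> s1 s2 s k [P1 [K1 [l1 [D1 rank1]]]] [P2 [K2 [l2 [D2 rank2]]]] /andP[s1s ss2].
  exists P2, (K1 * K2 + K2), (Num.min l1 l2); split => //.
  by apply: (dichotomy_at_between D1 D2 (le_trans s1s ss2)); rewrite ?rank1 ?rank2.
- by move=> s k [P [K [lam [_ <-]]]]; exact: rank_leq_col.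
- move=> s; have min_s : Num.min s (- g) <= s by rewrite ge_min lexx.
  have min_g : Num.min s (- g) <= - g by rewrite ge_min lexx orbT.
  exists (Num.min s (- g) - 1); last lra.
  exists (fun _ => 0), Kg, (- (Num.min s (- g) - 1) - g); split; last exact: mxrank0.
  by apply: dichotomy_at_below_growth; lra.
- move=> s; have max_s : s <= Num.max s g by rewrite le_max lexx.
  have max_g : g <= Num.max s g by rewrite le_max lexx orbT.
  exists (Num.max s g + 1); last lra.
  exists (fun _ => 1%:M), Kg, (Num.max s g + 1 - g); split; last exact: mxrank1.
  by apply: dichotomy_at_above_growth; lra.
move=> r [a [b [r_bounds ab ba spectrum]]]; exists r, a, b; split => // s.
rewrite -spectrum; split=> [notD k [P [K [lam [D _]]]] | notrk [P [K [lam D]]]].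
  by apply: notD; exists P, K, lam.
by apply: (notrk (\rank (P 0%N))); exists P, K, lam.
Qed.

End Growth.

End ShiftedDichotomy.

Lemma expn2_gt0 n : (0 < 2 ^ n)%N.
Proof. by rewrite expn_gt0. Qed.

Section LogFacts.
Variable R : realType.

Lemma ln2_gt0 : 0 < ln (2 : R).
Proof. by rewrite ln_gt0 // ltr1n. Qed.

Lemma ln_expn2 n : ln ((2 ^ n)%N%:R : R) = n%:R * ln 2.
Proof. by rewrite natrX lnXn // mulr_natl. Qed.

Lemma powR_natr_ratio (p q : nat) (c : R) : (0 < p)%N -> (0 < q)%N ->
  (p%:R / q%:R) `^ c = expR (c * (ln (p%:R : R) - ln (q%:R : R))).
Proof.
move=> p_gt0 q_gt0; have p'_gt0 : (0 : R) < p%:R by rewrite ltr0n.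
have q'_gt0 : (0 : R) < q%:R by rewrite ltr0n.
by rewrite /powR gt_eqF ?divr_gt0 // lnM ?posrE ?invr_gt0 // lnV ?posrE.
Qed.

Lemma subr_ln_natr_ge0 (m n : nat) : (0 < n)%N -> (n <= m)%N ->
  0 <= ln (m%:R : R) - ln (n%:R : R).
Proof.
move=> n_gt0 nm; rewrite subr_ge0 ler_ln ?posrE ?ltr0n ?ler_nat //.
exact: leq_trans nm.
Qed.

Lemma ln_trunc_log2 k : (0 < k)%N ->
  0 <= ln (k%:R : R) - (trunc_log 2 k)%:R * ln 2 < ln 2.
Proof.
move=> k_gt0; rewrite -ln_expn2 subr_ge0 ltrBlDr -lnM ?posrE ?ltr0n ?expn2_gt0 //.
rewrite -natrM -expnS ler_ln ?ltr_ln ?posrE ?ltr0n ?expn2_gt0 //.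
by rewrite ler_nat ltr_nat trunc_logP // trunc_log_ltn.
Qed.

Lemma ln_ratio_trunc_log2 (m n : nat) : (0 < n)%N -> (n <= m)%N ->
  `|(ln (m%:R : R) - ln (n%:R : R))
     - ((trunc_log 2 m)%:R - (trunc_log 2 n)%:R) * ln 2| <= ln 2.
Proof.
move=> n_gt0 nm; have m_gt0 := leq_trans n_gt0 nm.
have /andP[m1 m2] := ln_trunc_log2 m_gt0; have /andP[n1 n2] := ln_trunc_log2 n_gt0.
by rewrite ler_norml; apply/andP; split; lra.
Qed.

End LogFacts.

Section Dyadic.
Variables (R : realType) (d : nat) (A : nat -> 'M[R]_d) (N : nat -> 'cV[R]_d -> R).
Hypothesis A_unit : forall n, (0 < n)%N -> A n \in unitmx.
Hypothesis N_norm : forall n, (0 < n)%N -> is_norm (N n).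
Variables (K a : R).
Hypothesis K_gt0 : 0 < K.
Hypothesis a_gt0 : 0 < a.
Hypothesis A_growth : forall m n, (0 < n)%N -> (n <= m)%N -> forall x : 'cV[R]_d,
  N m (cocycle A m n *m x) <= K * ((m%:R / n%:R) `^ a) * N n x /\
  N n (cocycle A n m *m x) <= K * ((m%:R / n%:R) `^ a) * N m x.

Definition dyadicA n := cocycle A (2 ^ n.+1) (2 ^ n).
Definition dyadicN n := N (2 ^ n)%N.

Lemma dyadicA_unit j : (0 <= j)%N -> dyadicA j \in unitmx.
Proof. by move=> _; rewrite (cocycle_unit A_unit) ?expn2_gt0. Qed.

Lemma dyadicN_norm n : is_norm (dyadicN n).
Proof. exact/N_norm/expn2_gt0. Qed.

Lemma cocycle_dyadicA m n : cocycle dyadicA m n = cocycle A (2 ^ m) (2 ^ n).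
Proof.
have fund k : fundmx dyadicA 0 k = cocycle A (2 ^ k) 1.
  rewrite /fundmx subn0; elim: k => [|k IH] /=; first by rewrite cocycle_id.
  by rewrite IH add0n /dyadicA (cocycle_comp A_unit) ?expn2_gt0.
rewrite (cocycle_fundmx dyadicA_unit) // !fund.
have <- : cocycle A 1 (2 ^ n) = invmx (cocycle A (2 ^ n) 1).
  apply: invmx_unique; first by rewrite (cocycle_unit A_unit) ?expn2_gt0.
  by rewrite (cocycle_mulV A_unit) ?expn2_gt0.
by rewrite (cocycle_comp A_unit) ?expn2_gt0.
Qed.

Lemma dyadicA_growth m n : (n <= m)%N -> forall x,
  dyadicN m (cocycle dyadicA m n *m x)
    <= K * expR (a * ln 2 * (m%:R - n%:R)) * dyadicN n x /\
  dyadicN n (cocycle dyadicA n m *m x)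
    <= K * expR (a * ln 2 * (m%:R - n%:R)) * dyadicN m x.
Proof.
move=> nm x; rewrite !cocycle_dyadicA.
have [] := A_growth (expn2_gt0 n) (leq_pexp2l (isT : (0 < 2)%N) nm) x.
rewrite powR_natr_ratio ?expn2_gt0 // !ln_expn2.
by rewrite (_ : a * ln 2 * _ = a * (m%:R * ln 2 - n%:R * ln 2)); last ring.
Qed.

Lemma norm_cocycle_scaled_dyadic s k m n x :
  dyadicN k (cocycle (fun j => expR (- s) *: dyadicA j) m n *m x)
  = expR (- s * (m%:R - n%:R)) * dyadicN k (cocycle dyadicA m n *m x).
Proof.
rewrite (_ : (fun j => _) = fun j => expR ((fun i : nat => - s * i%:R) j.+1
                                       - (fun i : nat => - s * i%:R) j) *: dyadicA j).
  rewrite (cocycle_scale _ dyadicA_unit) // -scalemxAl normZ_ge0 ?expR_ge0 //.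
    by congr (expR _ * _); ring.
  exact: dyadicN_norm.
by apply: funext => j; congr (expR _ *: _); rewrite -natr1; ring.
Qed.

Lemma exp_dichotomy_dichotomy_at s :
  strong_exp_dichotomy (fun n => expR (- s) *: dyadicA n) dyadicN ->
  exists P K lam, dichotomy_at dyadicA dyadicN s P K lam.
Proof.
move=> [K' [a' [lam [P [[K'_gt0 lam_gt0 _] [Pproj CP bounds]]]]]].
exists P, K', lam; split=> // [n|m n nm x|m n nm x].
- apply: (@scalerI _ _ (expR (- s))); first by rewrite gt_eqF ?expR_gt0.
  by rewrite scalemxAl scalemxAr CP.
- have [bound _ _ _] := bounds m n nm x; rewrite norm_cocycle_scaled_dyadic in bound.
  by apply: (ler_expR_unscale (ltW K'_gt0) (norm_ge0 (dyadicN_norm n) x) bound); ring.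
- have [_ bound _ _] := bounds m n nm x; rewrite norm_cocycle_scaled_dyadic in bound.
  by apply: (ler_expR_unscale (ltW K'_gt0) (norm_ge0 (dyadicN_norm m) x) bound); ring.
Qed.

Lemma dichotomy_at_exp_dichotomy s P K' lam :
  dichotomy_at dyadicA dyadicN s P K' lam ->
  strong_exp_dichotomy (fun n => expR (- s) *: dyadicA n) dyadicN.
Proof.
case=> K'_gt0 lam_gt0 Pproj CP stable unstable.
have ln2_ge0 : 0 <= ln (2 : R) := ltW (ln2_gt0 R).
exists (K' + K), (lam + a * ln 2 + `|s|), lam, P; split.
  split=> //; first exact: addr_gt0.
  by have := mulr_ge0 (ltW a_gt0) ln2_ge0; have := normr_ge0 s; lra.
split=> // [n|m n nm x]; first by rewrite -!scalemxAl -scalemxAr CP.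
have shift K0 X Y u w v : X <= K0 * expR w * Y -> 0 < K0 -> K0 <= K' + K ->
    0 <= Y -> w + u <= v -> expR u * X <= (K' + K) * expR v * Y.
  by move=> XY K0_gt0 *; apply: ler_expR_scale XY _ => //; exact: ltW.
have Y_ge0 k : 0 <= dyadicN k x by exact: norm_ge0 (dyadicN_norm k) x.
have mn_ge0 := natrB_ge0 R nm.
have s_le := ler_norm s; have sN_le := ler_norm (- s); rewrite normrN in sN_le.
have [grow_fw grow_bw] := dyadicA_growth nm x.
rewrite !norm_cocycle_scaled_dyadic.
rewrite (_ : (n%:R - m%:R : R) = - (m%:R - n%:R)); last by ring.
split.
- apply: shift (stable m n nm x) K'_gt0 _ _ _ => //; first by rewrite lerDl ltW.
  lra.
- apply: shift (unstable m n nm x) K'_gt0 _ _ _ => //; first by rewrite lerDl ltW.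
  lra.
- apply: shift grow_fw K_gt0 _ _ _ => //; first by rewrite lerDr ltW.
  nra.
- apply: shift grow_bw K_gt0 _ _ _ => //; first by rewrite lerDr ltW.
  nra.
Qed.

Lemma dyadic_block_bound n x : (0 < n)%N ->
  N n (cocycle A n (2 ^ trunc_log 2 n) *m x)
    <= K * expR (a * ln 2) * N (2 ^ trunc_log 2 n)%N x /\
  N (2 ^ trunc_log 2 n)%N (cocycle A (2 ^ trunc_log 2 n) n *m x)
    <= K * expR (a * ln 2) * N n x.
Proof.
move=> n_gt0; set i := trunc_log 2 n.
have [fw bw] := A_growth (expn2_gt0 i) (trunc_logP (isT : (1 < 2)%N) n_gt0) x.
have /andP[_ lt2] := ln_trunc_log2 R n_gt0.
rewrite powR_natr_ratio ?expn2_gt0 // ln_expn2 in fw bw.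
have K_le : K * expR (a * (ln n%:R - i%:R * ln 2)) <= K * expR (a * ln 2).
  by rewrite ler_pM2l // ler_expR ler_pM2l // ltW.
split.
- by apply: le_trans fw _; rewrite ler_wpM2r ?(norm_ge0 (N_norm (expn2_gt0 i))).
- by apply: le_trans bw _; rewrite ler_wpM2r ?(norm_ge0 (N_norm n_gt0)).
Qed.

Definition poly_rescaled (tau : R) n := ((n.+1)%:R / n%:R) `^ (- tau) *: A n.

Lemma poly_rescaled_unit tau j : (0 < j)%N -> poly_rescaled tau j \in unitmx.
Proof.
move=> j_gt0; rewrite unitmxZ ?A_unit // unitfE gt_eqF // powR_gt0 //.
by rewrite divr_gt0 ?ltr0n.
Qed.

Lemma cocycle_poly_rescaled tau m n : (0 < m)%N -> (0 < n)%N ->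
  cocycle (poly_rescaled tau) m n
  = expR (- tau * (ln (m%:R : R) - ln (n%:R : R))) *: cocycle A m n.
Proof.
move=> m_gt0 n_gt0; pose f k := - tau * ln (k%:R : R).
rewrite (@cocycle_eq _ _ _ (fun j => expR (f j.+1 - f j) *: A j) 1) //.
  by rewrite (cocycle_scale _ A_unit) // /f; congr (expR _ *: _); ring.
move=> j j_gt0; rewrite /poly_rescaled powR_natr_ratio // /f.
by congr (expR _ *: _); ring.
Qed.

Lemma norm_cocycle_poly_rescaled tau k m n x : (0 < k)%N -> (0 < m)%N -> (0 < n)%N ->
  N k (cocycle (poly_rescaled tau) m n *m x)
  = expR (- tau * (ln (m%:R : R) - ln (n%:R : R))) * N k (cocycle A m n *m x).
Proof.
move=> k_gt0 m_gt0 n_gt0.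
by rewrite cocycle_poly_rescaled // -scalemxAl (normZ_ge0 (N_norm k_gt0)) ?expR_ge0.
Qed.

Lemma poly_dichotomy_dichotomy_at tau :
  strong_poly_dichotomy (poly_rescaled tau) N ->
  exists P K lam, dichotomy_at dyadicA dyadicN (tau * ln 2) P K lam.
Proof.
move=> [K' [a' [lam [P [[K'_gt0 lam_gt0 _] [Pproj CP bounds]]]]]].
have dyadic_le m n : (n <= m)%N -> (2 ^ n <= 2 ^ m)%N by exact: leq_pexp2l.
exists (fun n => P (2 ^ n)%N), K', (lam * ln 2).
split=> // [|n|n|m n nm x|m n nm x].
- by rewrite mulr_gt0 ?ln2_gt0.
- exact/Pproj/expn2_gt0.
- have := cocycle_intertwine (poly_rescaled_unit tau) CP (expn2_gt0 n.+1) (expn2_gt0 n).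
  rewrite cocycle_poly_rescaled ?expn2_gt0 // -scalemxAl -scalemxAr.
  by apply: scalerI; rewrite gt_eqF ?expR_gt0.
- have [bound _ _ _] := bounds _ _ (expn2_gt0 n) (dyadic_le m n nm) x.
  rewrite norm_cocycle_poly_rescaled ?expn2_gt0 // powR_natr_ratio ?expn2_gt0 //
    !ln_expn2 in bound.
  rewrite cocycle_dyadicA.
  by apply: (ler_expR_unscale (ltW K'_gt0) (norm_ge0 (dyadicN_norm n) x) bound); ring.
- have [_ bound _ _] := bounds _ _ (expn2_gt0 n) (dyadic_le m n nm) x.
  rewrite norm_cocycle_poly_rescaled ?expn2_gt0 // powR_natr_ratio ?expn2_gt0 //
    !ln_expn2 in bound.
  rewrite cocycle_dyadicA.
  by apply: (ler_expR_unscale (ltW K'_gt0) (norm_ge0 (dyadicN_norm m) x) bound); ring.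
Qed.

Section Interpolation.
Variables (tau : R) (P : nat -> 'M[R]_d) (Kd lam : R).
Hypothesis D : dichotomy_at dyadicA dyadicN (tau * ln 2) P Kd lam.

Definition interp_proj k := cocycle A k 1 *m P 0%N *m cocycle A 1 k.

Lemma interp_proj_dyadic k l : (0 < k)%N ->
  interp_proj k = cocycle A k (2 ^ l) *m P l *m cocycle A (2 ^ l) k.
Proof.
move=> k_gt0; have CP := dichotomy_intertwine D.
have P_l : P l = cocycle dyadicA l 0 *m P 0%N *m cocycle dyadicA 0 l.
  rewrite (cocycle_intertwine dyadicA_unit (fun j _ => CP j)) // -mulmxA.
  by rewrite (cocycle_mulV dyadicA_unit) // mulmx1.
rewrite P_l !cocycle_dyadicA expn0 !mulmxA (cocycle_comp A_unit) ?expn2_gt0 //.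
by rewrite -mulmxA (cocycle_comp A_unit) ?expn2_gt0.
Qed.

Lemma interp_proj_idem k : (0 < k)%N -> interp_proj k *m interp_proj k = interp_proj k.
Proof.
move=> k_gt0; rewrite /interp_proj -!mulmxA (mulmxA (cocycle A 1 k)).
by rewrite (cocycle_mulV A_unit) // mul1mx (mulmxA (P 0%N)) (dichotomy_proj D).
Qed.

Lemma interp_proj_intertwine k : (0 < k)%N ->
  poly_rescaled tau k *m interp_proj k = interp_proj k.+1 *m poly_rescaled tau k.
Proof.
move=> k_gt0; rewrite /poly_rescaled -scalemxAl -scalemxAr; congr (_ *: _).
rewrite -(cocycle_succ A k) /interp_proj !mulmxA (cocycle_comp A_unit) //.
by rewrite -!mulmxA (cocycle_comp A_unit).
Qed.

(* [Kb] bounds A across a dyadic block [2 ^ l, 2 ^ l.+1); [Kp] pays for two such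
   blocks and for the gap, at most [ln 2], between the polynomial time [ln m - ln n]
   and the dyadic time [(l - i) ln 2]. *)
Let lam' := lam / ln 2.
Let Kb := K * expR (a * ln 2).
Let Kp := Kb * Kb * Kd * expR ((lam' + `|tau|) * ln 2) + K.
Let ap := a + `|tau| + lam'.

Let Kd_gt0 : 0 < Kd := dichotomy_K_gt0 D.

Let lam'_gt0 : 0 < lam'.
Proof. by rewrite divr_gt0 ?ln2_gt0 ?(dichotomy_lam_gt0 D). Qed.

Let lamE : lam = lam' * ln 2.
Proof. by rewrite divfK // gt_eqF ?ln2_gt0. Qed.

Let Kb_gt0 : 0 < Kb.
Proof. by rewrite mulr_gt0 ?expR_gt0. Qed.

Let Kd_expR_ge0 e : 0 <= Kd * expR e.
Proof. exact: mulr_ge0 (ltW Kd_gt0) (expR_ge0 e). Qed.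

Lemma interp_exponent_le c U V E X : `|c| <= lam' + `|tau| -> `|U - V| <= ln 2 ->
  0 <= X -> E = - lam' * U + c * (U - V) ->
  Kb * Kb * Kd * expR E * X <= Kp * expR (- lam' * U) * X.
Proof.
move=> c_le UV_le X_ge0 ->; rewrite addrC expRD mulrA.
apply: ler_mulexpR => //; first by rewrite !mulr_ge0 ?expR_ge0 // ltW.
have : Kb * Kb * Kd * expR (c * (U - V)) <= Kb * Kb * Kd * expR ((lam' + `|tau|) * ln 2).
  rewrite ler_pM2l ?ler_expR ?mul_le_norm_bounds //.
  by rewrite !mulr_gt0 ?expR_gt0.
by rewrite /Kp => le_exp; have := K_gt0; lra.
Qed.

Lemma interp_stable m n : (0 < n)%N -> (n <= m)%N -> forall x,
  N m (cocycle (poly_rescaled tau) m n *m (interp_proj n *m x))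
    <= Kp * ((m%:R / n%:R) `^ (- lam')) * N n x.
Proof.
move=> n_gt0 nm x; have m_gt0 := leq_trans n_gt0 nm.
set i := trunc_log 2 n; set l := trunc_log 2 m.
have il : (i <= l)%N := leq_trunc_log 2 nm.
rewrite norm_cocycle_poly_rescaled //; set y := cocycle A (2 ^ i) n *m x.
have -> : cocycle A m n *m (interp_proj n *m x)
    = cocycle A m (2 ^ l) *m (cocycle dyadicA l i *m (P i *m y)).
  rewrite (interp_proj_dyadic i n_gt0) cocycle_dyadicA !mulmxA.
  by rewrite !(cocycle_comp A_unit) ?expn2_gt0.
have [bound_l _] := dyadic_block_bound (cocycle dyadicA l i *m (P i *m y)) m_gt0.
have bound_d := dichotomy_stable D il y.
have [_ bound_i] := dyadic_block_bound x n_gt0.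
have chain := ler_chain3 (ltW Kb_gt0) (Kd_expR_ge0 _) bound_l bound_d bound_i.
apply: le_trans (ler_wpM2l (expR_ge0 _) chain) _.
rewrite powR_natr_ratio // (_ : expR _ * _ = Kb * Kb * Kd * expR (- tau
  * (ln m%:R - ln n%:R) + (tau * ln 2 - lam) * (l%:R - i%:R)) * N n x); last first.
  by rewrite expRD /Kb; ring.
apply: (interp_exponent_le (c := lam' - tau) _ (ln_ratio_trunc_log2 R n_gt0 nm)).
- by rewrite (le_trans (ler_normB _ _)) // ger0_norm // ltW.
- exact: norm_ge0 (N_norm n_gt0) x.
- by rewrite lamE; ring.
Qed.

Lemma interp_unstable m n : (0 < n)%N -> (n <= m)%N -> forall x,
  N n (cocycle (poly_rescaled tau) n m *m ((1%:M - interp_proj m) *m x))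
    <= Kp * ((m%:R / n%:R) `^ (- lam')) * N m x.
Proof.
move=> n_gt0 nm x; have m_gt0 := leq_trans n_gt0 nm.
set i := trunc_log 2 n; set l := trunc_log 2 m.
have il : (i <= l)%N := leq_trunc_log 2 nm.
rewrite norm_cocycle_poly_rescaled //; set y := cocycle A (2 ^ l) m *m x.
have -> : cocycle A n m *m ((1%:M - interp_proj m) *m x)
    = cocycle A n (2 ^ i) *m (cocycle dyadicA i l *m ((1%:M - P l) *m y)).
  rewrite (interp_proj_dyadic l m_gt0) cocycle_dyadicA !mulmxBl !mul1mx !mulmxBr.
  by rewrite !mulmxA !(cocycle_comp A_unit) ?expn2_gt0.
have [bound_i _] := dyadic_block_bound (cocycle dyadicA i l *m ((1%:M - P l) *m y)) n_gt0.
have bound_d := dichotomy_unstable D il y.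
have [_ bound_l] := dyadic_block_bound x m_gt0.
have chain := ler_chain3 (ltW Kb_gt0) (Kd_expR_ge0 _) bound_i bound_d bound_l.
apply: le_trans (ler_wpM2l (expR_ge0 _) chain) _.
rewrite powR_natr_ratio // (_ : expR _ * _ = Kb * Kb * Kd * expR (- tau
  * (ln n%:R - ln m%:R) + - (tau * ln 2 + lam) * (l%:R - i%:R)) * N m x); last first.
  by rewrite expRD /Kb; ring.
apply: (interp_exponent_le (c := tau + lam') _ (ln_ratio_trunc_log2 R n_gt0 nm)).
- by rewrite (le_trans (ler_normD _ _)) // addrC (ger0_norm (ltW lam'_gt0)).
- exact: norm_ge0 (N_norm m_gt0) x.
- by rewrite lamE; ring.
Qed.

Lemma interp_growth m n : (0 < n)%N -> (n <= m)%N -> forall x,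
  N m (cocycle (poly_rescaled tau) m n *m x) <= Kp * ((m%:R / n%:R) `^ ap) * N n x /\
  N n (cocycle (poly_rescaled tau) n m *m x) <= Kp * ((m%:R / n%:R) `^ ap) * N m x.
Proof.
move=> n_gt0 nm x; have m_gt0 := leq_trans n_gt0 nm.
have [fw bw] := A_growth n_gt0 nm x.
rewrite powR_natr_ratio // in fw bw.
have U_ge0 := subr_ln_natr_ge0 R n_gt0 nm.
have tau_le := ler_wpM2r U_ge0 (ler_norm tau).
have tauN_le := ler_wpM2r U_ge0 (ler_norm (- tau)); rewrite normrN in tauN_le.
have lam'U_ge0 := mulr_ge0 (ltW lam'_gt0) U_ge0.
have K_le : K <= Kp.
  by rewrite /Kp lerDr mulr_ge0 ?expR_ge0 // !mulr_ge0 // ltW.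
rewrite !norm_cocycle_poly_rescaled // !powR_natr_ratio //; split.
- apply: ler_expR_scale fw _; rewrite ?(ltW K_gt0) ?(norm_ge0 (N_norm n_gt0)) //.
  by rewrite /ap; lra.
- apply: ler_expR_scale bw _; rewrite ?(ltW K_gt0) ?(norm_ge0 (N_norm m_gt0)) //.
  by rewrite /ap; lra.
Qed.

Lemma dichotomy_at_poly_dichotomy : strong_poly_dichotomy (poly_rescaled tau) N.
Proof.
exists Kp, ap, lam', interp_proj; split.
  split=> //; last by rewrite /ap lerDr addr_ge0 // ltW.
  by rewrite /Kp ltr_wpDl // mulr_ge0 ?expR_ge0 // !mulr_ge0 // ltW.
split=> [n | n | m n n_gt0 nm x]; first exact: interp_proj_idem.
  exact: interp_proj_intertwine.
have [fw bw] := interp_growth n_gt0 nm x.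
by split; [exact: interp_stable | exact: interp_unstable | |].
Qed.

End Interpolation.

Lemma Sigma_ED_dyadic :
  Sigma_ED dyadicA dyadicN = [set c | 0 < c /\ dichotomy_spectrum dyadicA dyadicN (ln c)].
Proof.
apply/seteqP; split=> c /= [c_gt0 not_dich]; split=> // dich.
  have cE : c^-1 = expR (- ln c) by rewrite expRN lnK ?posrE.
  apply: not_dich; have [P [K' [lam D]]] := dich.
  by rewrite cE; exact: dichotomy_at_exp_dichotomy D.
apply: not_dich; apply: exp_dichotomy_dichotomy_at.
by rewrite -[c]lnK ?posrE // -expRN in dich.
Qed.

Lemma Sigma_PD_dyadic :
  Sigma_PD A N = [set t | dichotomy_spectrum dyadicA dyadicN (t * ln 2)].
Proof.
apply/seteqP; split=> t /= not_dich dich; apply: not_dich.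
  by have [P [K' [lam D]]] := dich; exact: dichotomy_at_poly_dichotomy D.
exact: poly_dichotomy_dichotomy_at.
Qed.

End Dyadic.

Section IntervalImages.
Variables (R : realType) (S : set R) (r : nat) (lo hi : nat -> R).
Hypothesis S_intervals : forall s, S s <-> exists2 i, (i < r)%N & lo i <= s <= hi i.

Lemma ln_preimage_intervals :
  [set c | 0 < c /\ S (ln c)]
  = \bigcup_(i in [set i | (i < r)%N]) [set c | expR (lo i) <= c <= expR (hi i)].
Proof.
apply/seteqP; split=> c /=.
  move=> [c_gt0 /S_intervals[i ir lnc_in]]; exists i => //=.
  by rewrite -[c]lnK ?posrE // !ler_expR.
move=> [i ir /andP[lo_c c_hi]]; have c_gt0 := lt_le_trans (expR_gt0 _) lo_c.
split=> //; apply/S_intervals; exists i => //.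
by rewrite -(expRK (lo i)) -(expRK (hi i)) !ler_ln ?posrE ?expR_gt0 // lo_c c_hi.
Qed.

Lemma scale_preimage_intervals k : 0 < k ->
  [set t | S (t * k)]
  = \bigcup_(i in [set i | (i < r)%N]) [set t | lo i / k <= t <= hi i / k].
Proof.
move=> k_gt0; apply/seteqP; split=> t /=.
  by move=> /S_intervals[i ir tk_in]; exists i => //=; rewrite ler_pdivrMr // ler_pdivlMr.
move=> [i ir]; rewrite /= ler_pdivrMr // ler_pdivlMr // => tk_in.
by apply/S_intervals; exists i.
Qed.

End IntervalImages.

Theorem corollary2p2 (R : realType) (d : nat) (A : nat -> 'M[R]_d)
    (N : nat -> 'cV[R]_d -> R) :
  (0 < d)%N ->
  (forall n, (0 < n)%N -> A n \in unitmx) ->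
  (forall n, (0 < n)%N -> is_norm (N n)) ->
  (exists K a : R, 0 < K /\ 0 < a /\
     forall m n, (0 < n)%N -> (n <= m)%N -> forall x : 'cV[R]_d,
       N m (cocycle A m n *m x) <= K * ((m%:R / n%:R) `^ a) * N n x /\
       N n (cocycle A n m *m x) <= K * ((m%:R / n%:R) `^ a) * N m x) ->
  let B := fun n : nat => cocycle A (2 ^ n.+1) (2 ^ n) in
  let Nt := fun n : nat => N (2 ^ n)%N in
  exists (r : nat) (a b : nat -> R),
    [/\ (1 <= r <= d)%N,
        (forall i, (i < r)%N -> a i <= b i),
        (forall i, (i.+1 < r)%N -> b i < a i.+1),
        Sigma_ED B Nt = \bigcup_(i in [set i : nat | (i < r)%N])
                          [set t : R | a i <= t <= b i] &
        Sigma_PD A N = \bigcup_(i in [set i : nat | (i < r)%N])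
                          [set t : R | ln (a i) / ln 2 <= t <= ln (b i) / ln 2]].
Proof.
move=> d_gt0 A_unit N_norm [K [a [K_gt0 [a_gt0 A_growth]]]] B Nt.
have [r [lo [hi [r_bounds lo_hi hi_lo spectrum]]]] :=
  dichotomy_spectrum_intervals (dyadicA_unit A_unit) (dyadicN_norm N_norm) K_gt0
    (dyadicA_growth A_unit A_growth) d_gt0.
exists r, (expR \o lo), (expR \o hi); split=> //.
- by move=> i ir; rewrite ler_expR lo_hi.
- by move=> i ir; rewrite ltr_expR hi_lo.
- rewrite (Sigma_ED_dyadic A_unit N_norm K_gt0 a_gt0 A_growth).
  exact: ln_preimage_intervals spectrum.
rewrite (Sigma_PD_dyadic A_unit N_norm K_gt0 a_gt0 A_growth).
rewrite (scale_preimage_intervals spectrum (ln2_gt0 R)).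
by apply: eq_bigcupr => i _ /=; rewrite !expRK.
Qed.
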